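(* If $G$ is a connected graph with girth at least $5$ and maximum degree $\Delta$, then $\chi_{D\ell}(G)\le\Delta+2$; that is, for every assignment of lists $L(v)$ of colors with $|L(v)|\ge\Delta+2$ for all $v\in V(G)$, there is a proper distinguishing coloring $\varphi$ of $G$ with $\varphi(v)\in L(v)$ for all $v$.
   Context: A coloring $\varphi$ of $G$ is proper if adjacent vertices get different colors, and distinguishing if the only automorphism $f$ of $G$ with $\varphi(f(v))=\varphi(v)$ for all $v$ is the identity. The distinguishing list chromatic number $\chi_{D\ell}(G)$ is the smallest $k$ such that for every list assignment $L$ with $|L(v)|\ge k$ for all $v$, there exists a proper distinguishing coloring $\varphi$ with $\varphi(v)\in L(v)$ for all $v$. *)

From mathcomp Require Import all_boot all_fingroup.
Set Implicit Arguments. Unset Strict Implicit. Unset Printing Implicit Defensive.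

Definition simple_graph (T : finType) (e : rel T) : Prop :=
  symmetric e /\ irreflexive e.

Definition connected_graph (T : finType) (e : rel T) : Prop :=
  forall x y : T, connect e x y.

Definition is_graph_cycle (T : finType) (e : rel T) (s : seq T) : bool :=
  [&& uniq s, 3 <= size s & path.cycle e s].

Definition girth_at_least (T : finType) (e : rel T) (k : nat) : Prop :=
  forall s : seq T, is_graph_cycle e s -> k <= size s.

Definition degree (T : finType) (e : rel T) (v : T) : nat := #|[set u | e v u]|.

Definition max_degree (T : finType) (e : rel T) : nat :=
  \max_(v : T) degree e v.

Definition proper_coloring (T : finType) (C : Type) (e : rel T) (phi : T -> C) : Prop :=
  forall x y : T, e x y -> phi x <> phi y.

Definition graph_automorphism (T : finType) (e : rel T) (f : {perm T}) : Prop :=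
  forall x y : T, e (f x) (f y) = e x y.

Definition distinguishing (T : finType) (C : Type) (e : rel T) (phi : T -> C) : Prop :=
  forall f : {perm T}, graph_automorphism e f ->
    (forall v : T, phi (f v) = phi v) -> f = 1%g.

From mathcomp Require Import all_boot all_fingroup.
Set Implicit Arguments. Unset Strict Implicit. Unset Printing Implicit Defensive.

(* Root the graph at a vertex r and list the vertices in breadth-first order.
   Colour greedily along this order: a vertex avoids the colour of r and, if it
   has at least two earlier neighbours, their colours; if it has a single earlier
   neighbour p, it avoids the colour of p and of every neighbour of p coloured so
   far.  That forbids at most Delta + 1 colours, and the colouring is proper.
   A colour-preserving automorphism f fixes r, whose colour is unique, and then
   every vertex x, by induction along the order: f x has the same earlier
   neighbours as x.  Two of them would close a 4-cycle with x and f x; a single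
   one, p, is (by monotonicity of breadth-first parents and the absence of
   triangles) also the only earlier neighbour of f x, which therefore had to
   avoid the colour of x. *)

Section Girth.
Variables (T : finType) (e : rel T).
Hypotheses (e_irr : irreflexive e) (girth5 : girth_at_least e 5).

Lemma adj_neq a b : e a b -> a != b.
Proof. by apply: contraTneq => ->; rewrite e_irr. Qed.

Lemma no_triangle a b c : e a b -> e b c -> e c a -> False.
Proof.
move=> ab bc ca; have := @girth5 [:: a; b; c].
rewrite /is_graph_cycle /= ab bc ca !inE !andbT negb_or.
by rewrite (adj_neq ab) (adj_neq bc) eq_sym (adj_neq ca) => /(_ isT).
Qed.

Lemma square_diag_eq x w a b : x != w -> e x a -> e a w -> e w b -> e b x -> a = b.
Proof.
move=> xw xa aw wb bx; apply/eqP/negPn/negP => ab.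
have := @girth5 [:: x; a; w; b].
rewrite /is_graph_cycle /= xa aw wb bx !inE !andbT !negb_or.
by rewrite (adj_neq xa) (adj_neq aw) (adj_neq wb) xw ab eq_sym (adj_neq bx) => /(_ isT).
Qed.

End Girth.

Lemma find_rcons (T : Type) (a : pred T) s z : has a s -> find a (rcons s z) = find a s.
Proof. by move=> has_a; rewrite -cats1 find_cat has_a. Qed.

Lemma leq_find_rcons (T : Type) (a : pred T) s z : find a s <= find a (rcons s z).
Proof.
rewrite -cats1 find_cat; case: ifP => // _.
exact: leq_trans (find_size a s) (leq_addr _ _).
Qed.

Lemma mem_take_index (T : eqType) (s : seq T) x y :
  (y \in take (index x s) s) = (index y s < index x s).
Proof.
apply/idP/idP => [/index_ltn //|lt_yx].
by rewrite in_take // -index_mem (leq_trans lt_yx) ?index_size.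
Qed.

Section BfsOrder.
Variables (T : finType) (e : rel T).

(* [find (e v) s] is the position of the parent of [v], its first neighbour in
   [s].  The monotonicity clause also covers [v \notin s] (where
   [index v s = size s]): this is the invariant that lets a breadth-first order be
   grown one vertex at a time. *)
Definition bfs_order (r : T) (s : seq T) : Prop :=
  [/\ uniq s, r \in s, index r s = 0,
      {in s, forall v, v != r -> find (e v) s < index v s} &
      forall u v, u \in s -> u != r -> index u s <= index v s ->
        find (e u) s <= find (e v) s].

Lemma bfs_order_rcons r s z :
  bfs_order r s -> z \notin s -> has (e z) s ->
  (forall v, v \notin s -> find (e z) s <= find (e v) s) ->
  bfs_order r (rcons s z).
Proof.
case=> s_uniq r_s r_first s_parent s_mono zNs z_nbr z_min.
have index_s u : u \in s -> index u (rcons s z) = index u s.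
  by move=> us; rewrite -cats1 index_cat us.
have index_z : index z (rcons s z) = size s.
  by rewrite -cats1 index_cat (negbTE zNs) /= eqxx addn0.
have nbr_s u : u \in s -> u != r -> has (e u) s.
  by move=> us ur; rewrite has_find (leq_trans (s_parent u us ur)) ?index_size.
split.
- by rewrite rcons_uniq zNs.
- by rewrite mem_rcons inE r_s orbT.
- by rewrite index_s.
- move=> v; rewrite mem_rcons inE => /orP[/eqP-> _|vs vr].
    by rewrite index_z find_rcons // -has_find.
  by rewrite index_s // find_rcons ?nbr_s //; apply: s_parent.
move=> u v; rewrite mem_rcons inE => /orP[/eqP->|us] ur le_uv.
  have vNs : v \notin s.
    by apply: contraTN le_uv => vs; rewrite index_z index_s // -ltnNge index_mem.
  by rewrite find_rcons //; apply: leq_trans (z_min v vNs) (leq_find_rcons _ _ _).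
rewrite find_rcons ?nbr_s //; apply: leq_trans (leq_find_rcons _ _ z).
apply: s_mono => //; case: (boolP (v \in s)) => [vs|/memNindex->].
  by rewrite -!index_s.
exact: index_size.
Qed.

Hypothesis e_sym : symmetric e.

Lemma boundary_vertex (s : seq T) x y : connect e x y -> x \in s -> y \notin s ->
  exists2 z, z \notin s & has (e z) s.
Proof.
move=> xy xs yNs; case: (boolP [exists z, (z \notin s) && has (e z) s]).
  by case/existsP=> z /andP[]; exists z.
move/existsPn=> no_boundary.
have s_closed : closed e (mem s).
  move=> a b ab; apply/idP/idP => [as_|bs]; apply/negPn/negP => Nin.
  - by have := no_boundary b; rewrite Nin /=; case/hasP; exists a; rewrite // e_sym.
  - by have := no_boundary a; rewrite Nin /=; case/hasP; exists b.
by move: yNs; rewrite -[y \in s](closed_connect s_closed xy) xs.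
Qed.

Lemma bfs_order_extend r s v : connected_graph e -> bfs_order r s -> v \notin s ->
  exists2 z, z \notin s & bfs_order r (rcons s z).
Proof.
move=> conn s_bfs vNs.
have [_ r_s _ _ _] := s_bfs.
have [y yNs y_nbr] := boundary_vertex (conn r v) r_s vNs.
case: (@arg_minnP _ y [predC s] (fun z => find (e z) s) yNs) => z zNs z_min.
exists z => //; apply: bfs_order_rcons => //.
by rewrite has_find (leq_ltn_trans (z_min _ yNs)) // -has_find.
Qed.

Lemma bfs_order_exists r : connected_graph e -> exists s, bfs_order r s /\ forall v, v \in s.
Proof.
move=> conn; have r_bfs : bfs_order r [:: r].
  split; rewrite /= ?inE ?eqxx //.
  - by move=> v; rewrite inE => /eqP->; rewrite eqxx.
  - by move=> u v; rewrite inE => /eqP->; rewrite eqxx.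
have [n le_card] : exists n, #|T| <= size [:: r] + n by exists #|T|; rewrite leq_addl.
elim: n [:: r] le_card r_bfs => [|n IH] s le_card s_bfs;
  (have [v /= vNs|s_full] := pickP [predC s];
   last by exists s; split => // v; apply/negbFE/s_full).
  have [s_uniq _ _ _ _] := s_bfs.
  have := max_card (mem (v :: s)); rewrite (card_uniqP _) /= ?vNs //.
  by move/leq_trans/(_ le_card); rewrite addn0 ltnn.
have [z zNs zs_bfs] := bfs_order_extend conn s_bfs vNs.
by apply: IH zs_bfs; rewrite size_rcons addSnnS.
Qed.

End BfsOrder.

Lemma exists_color_avoiding (C : eqType) (l f : seq C) :
  size f < size (undup l) -> exists2 c, c \in l & c \notin f.
Proof.
move=> lt_fl; apply/hasP; apply: contraTT lt_fl => /hasPn l_sub_f.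
rewrite -leqNgt uniq_leq_size ?undup_uniq // => c; rewrite mem_undup.
by move/l_sub_f/negPn.
Qed.

Section GreedyChoice.
Variables (T C : eqType) (s : seq T) (A : T -> seq C) (F : (T -> C) -> T -> seq C).
Hypotheses (s_uniq : uniq s)
  (F_local : {in s, forall v phi psi,
     (forall u, index u s < index v s -> phi u = psi u) -> F phi v = F psi v})
  (F_small : {in s, forall v phi, size (F phi v) < size (undup (A v))}).

Lemma greedy_choice (phi0 : T -> C) :
  exists phi : T -> C, {in s, forall v, phi v \in A v /\ phi v \notin F phi v}.
Proof.
suff prefix p q : s = p ++ q ->
    exists phi : T -> C, {in p, forall v, phi v \in A v /\ phi v \notin F phi v}.
  exact: (prefix s [::] (esym (cats0 s))).
elim/last_ind: p q => [|p v IH] q def_s; first by exists phi0.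
rewrite cat_rcons in def_s; have [phi phi_ok] := IH _ def_s.
have vs : v \in s by rewrite def_s mem_cat inE eqxx orbT.
have p_s u : u \in p -> u \in s by rewrite def_s mem_cat => ->.
have before_v u : u \in p -> index u s < index v s.
  have vNp : v \notin p.
    by move: s_uniq; rewrite def_s cat_uniq /= => /and3P[_ /norP[]].
  by move=> up; rewrite def_s !index_cat up (negbTE vNp) /= eqxx addn0 index_mem.
have [c cA cF] := exists_color_avoiding (F_small vs phi).
pose psi u := if u == v then c else phi u.
have psi_phi u : index u s < index v s -> psi u = phi u.
  by rewrite /psi; case: eqP => // ->; rewrite ltnn.
exists psi => u; rewrite mem_rcons inE => /orP[/eqP->|up].
  by rewrite /psi eqxx (F_local vs psi_phi).
have lt_uv := before_v u up.
rewrite psi_phi // (F_local (p_s u up) (psi := phi)) => [|y lt_yu]; first exact: phi_ok.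
by rewrite psi_phi // (ltn_trans lt_yu).
Qed.

End GreedyChoice.

Lemma degree_le_max (T : finType) (e : rel T) v : degree e v <= max_degree e.
Proof. exact: (@leq_bigmax T (degree e)). Qed.

Lemma size_filter_le_degree (T : finType) (e : rel T) (q : seq T) u :
  uniq q -> size [seq y <- q | e u y] <= degree e u.
Proof.
move=> q_uniq; rewrite /degree cardE uniq_leq_size ?filter_uniq // => y.
by rewrite mem_filter mem_enum inE => /andP[].
Qed.

Lemma size_filter_lt_degree (T : finType) (e : rel T) (q : seq T) u x :
  uniq q -> x \notin q -> e u x -> size [seq y <- q | e u y] < degree e u.
Proof.
move=> q_uniq xNq ux; rewrite /degree cardE -[_.+1]/(size (x :: _)).
rewrite uniq_leq_size /= ?mem_filter ?(negbTE xNq) ?andbF ?filter_uniq // => y.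
by rewrite inE mem_filter mem_enum inE => /orP[/eqP->|/andP[]].
Qed.

Section BfsColoring.
Variables (T : finType) (e : rel T) (C : eqType) (r : T) (s : seq T).

Definition nbrs_before (v u : T) : seq T := [seq y <- take (index v s) s | e u y].

Definition forbidden (phi : T -> C) (v : T) : seq C :=
  if v == r then [::] else
  phi r :: if nbrs_before v v is [:: p] then phi p :: map phi (nbrs_before v p)
           else map phi (nbrs_before v v).

Lemma mem_nbrs_before v u y : (y \in nbrs_before v u) = e u y && (index y s < index v s).
Proof. by rewrite mem_filter mem_take_index. Qed.

Lemma mem_forbidden_root phi v : v != r -> phi r \in forbidden phi v.
Proof. by rewrite /forbidden => /negbTE->; rewrite inE eqxx. Qed.

Lemma mem_forbidden_nbr phi v u : v != r -> u \in nbrs_before v v -> phi u \in forbidden phi v.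
Proof.
rewrite /forbidden => /negbTE-> uv; rewrite inE; apply/orP; right.
case: (nbrs_before v v) uv => [|p [|q t]] //=; last by move/(map_f phi).
by rewrite !inE => /eqP->; rewrite eqxx.
Qed.

Lemma mem_forbidden_sibling phi v p x : v != r -> nbrs_before v v = [:: p] ->
  x \in nbrs_before v p -> phi x \in forbidden phi v.
Proof.
by rewrite /forbidden => /negbTE-> -> xp; rewrite !inE (map_f phi xp) !orbT.
Qed.

Hypotheses (e_sym : symmetric e) (e_irr : irreflexive e).
Hypotheses (s_bfs : bfs_order e r s) (s_full : forall v, v \in s).

Lemma index_eq0 v : (index v s == 0) = (v == r).
Proof.
have [_ r_s r_first _ _] := s_bfs.
apply/eqP/eqP => [v0|->//]; apply: (index_inj v (s_full v) r_s).
by rewrite v0 r_first.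
Qed.

Lemma size_forbidden phi v : size (forbidden phi v) <= max_degree e + 1.
Proof.
have [s_uniq _ _ _ _] := s_bfs.
have pre_uniq : uniq (take (index v s) s) by rewrite take_uniq.
have vNpre : v \notin take (index v s) s by rewrite mem_take_index ltnn.
rewrite /forbidden; case: eqP => // _ /=; rewrite addn1 ltnS.
case nb: (nbrs_before v v) => [|p [|q t]] /=; rewrite ?size_map //; last first.
  have := size_filter_le_degree e v pre_uniq; rewrite -/(nbrs_before v v) nb.
  by move/leq_trans; apply; apply: degree_le_max.
have : p \in nbrs_before v v by rewrite nb inE.
rewrite mem_nbrs_before e_sym => /andP[pv _].
exact: leq_trans (size_filter_lt_degree pre_uniq vNpre pv) (degree_le_max _ _).
Qed.

Lemma forbidden_local v phi psi : (forall u, index u s < index v s -> phi u = psi u) ->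
  forbidden phi v = forbidden psi v.
Proof.
move=> agree; rewrite /forbidden; case: eqP => // /eqP vr.
have [_ _ r_first _ _] := s_bfs.
have eq_map_nbrs u : map phi (nbrs_before v u) = map psi (nbrs_before v u).
  by apply/eq_in_map => y; rewrite mem_nbrs_before => /andP[_ /agree].
rewrite agree ?r_first ?lt0n ?index_eq0 //; congr cons.
by case: (nbrs_before v v) (eq_map_nbrs v) => [|p [|q t]] //= [->]; rewrite eq_map_nbrs.
Qed.

Lemma exists_forbidden_avoiding (L : T -> seq C) :
  (forall v, max_degree e + 2 <= size (undup (L v))) ->
  exists phi : T -> C, forall v, phi v \in L v /\ phi v \notin forbidden phi v.
Proof.
have [s_uniq _ _ _ _] := s_bfs.
move=> L_big; have [c0 _ _] : exists2 c, c \in L r & c \notin [::].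
  by apply: exists_color_avoiding; rewrite (leq_trans _ (L_big r)) // addn2.
have small v phi : size (forbidden phi v) < size (undup (L v)).
  by rewrite (leq_ltn_trans (size_forbidden phi v)) // addn1 -addn2.
have [phi phi_ok] := greedy_choice s_uniq (A := L) (F := forbidden)
  (fun v _ => @forbidden_local v) (fun v _ => small v) (fun=> c0).
by exists phi => v; apply: phi_ok.
Qed.

Lemma forbidden_proper phi : (forall v, phi v \notin forbidden phi v) -> proper_coloring e phi.
Proof.
move=> phi_ok.
have neq_before x y : e x y -> index x s < index y s -> phi x != phi y.
  move=> xy lt_xy; have yr : y != r by rewrite -index_eq0 -lt0n (leq_ltn_trans _ lt_xy).
  apply: contraNneq (phi_ok y) => <-; apply: mem_forbidden_nbr => //.
  by rewrite mem_nbrs_before e_sym xy.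
move=> x y xy; apply/eqP; case: (ltngtP (index x s) (index y s)) => [lt_xy|lt_yx|eq_idx].
- exact: neq_before.
- by rewrite eq_sym; apply: neq_before; rewrite // e_sym.
- by move: xy; rewrite (index_inj x (s_full x) (s_full y) eq_idx) e_irr.
Qed.

Lemma find_in_nbrs_before v x :
  find (e v) s < index x s -> nth r s (find (e v) s) \in nbrs_before x v.
Proof.
have [s_uniq _ _ _ _] := s_bfs.
move=> lt_vx; have lt_vs : find (e v) s < size s := leq_trans lt_vx (index_size x s).
by rewrite mem_nbrs_before nth_find ?has_find // index_uniq.
Qed.

Lemma find_eq_unique_nbr v x p : nbrs_before x v = [:: p] ->
  find (e v) s < index x s -> find (e v) s = index p s.
Proof.
have [s_uniq _ _ _ _] := s_bfs.
move=> nb lt_vx; have := find_in_nbrs_before lt_vx; rewrite nb inE => /eqP <-.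
by rewrite index_uniq // (leq_trans lt_vx) ?index_size.
Qed.

Hypothesis girth5 : girth_at_least e 5.

Lemma unique_nbr_transfer x w p : x != r -> index x s < index w s ->
  nbrs_before x x = [:: p] -> (forall u, index u s < index x s -> e w u = e x u) ->
  nbrs_before w w = [:: p].
Proof.
have [s_uniq _ _ s_parent s_mono] := s_bfs.
move=> xr lt_xw nbx transfer.
have nb_wx : nbrs_before x w = [:: p].
  by rewrite -nbx; apply: eq_in_filter => y; rewrite mem_take_index => /transfer.
have /andP[xp lt_px] : e x p && (index p s < index x s).
  by rewrite -mem_nbrs_before nbx inE.
have pw : e p w by rewrite e_sym transfer.
have find_x : find (e x) s = index p s.
  exact: find_eq_unique_nbr nbx (s_parent x (s_full x) xr).
have find_w : find (e w) s = index p s.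
  apply: find_eq_unique_nbr nb_wx _; apply: leq_ltn_trans lt_px.
  by rewrite leqNgt; apply/negP => /(before_find r); rewrite nth_index // e_sym pw.
have p_pre : p \in take (index w s) s by rewrite mem_take_index (ltn_trans lt_px).
rewrite -(filter_pred1_uniq (take_uniq _ s_uniq) p_pre); apply: eq_in_filter => y.
rewrite mem_take_index => lt_yw /=; apply/idP/eqP => [wy|->]; last by rewrite e_sym.
case: (ltngtP (index y s) (index x s)) => [lt_yx|lt_xy|eq_yx].
- have : y \in nbrs_before x w by rewrite mem_nbrs_before wy.
  by rewrite nb_wx inE => /eqP.
- have yr : y != r by rewrite -index_eq0 -lt0n (leq_ltn_trans _ lt_xy).
  have find_y : find (e y) s = index p s.
    apply/eqP; rewrite eqn_leq -{1}find_w -find_x.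
    by rewrite !s_mono ?(ltnW lt_yw) ?(ltnW lt_xy).
  have yp : e y p.
    by rewrite -(nth_index r (s_full p)) -find_y nth_find // has_find find_y index_mem.
  by case: (no_triangle e_irr girth5 yp pw wy).
- rewrite (index_inj y (s_full y) (s_full x) eq_yx) in wy.
  by case: (no_triangle e_irr girth5 xp pw wy).
Qed.

Lemma automorphism_fixed_step phi f x :
  (forall v, phi v \notin forbidden phi v) -> graph_automorphism e f ->
  (forall v, phi (f v) = phi v) -> x != r ->
  (forall u, index u s < index x s -> f u = u) -> f x = x.
Proof.
have [s_uniq _ _ s_parent _] := s_bfs.
move=> phi_ok f_aut f_phi xr fixed; apply/eqP; apply: contraT => fxNx.
have transfer u : index u s < index x s -> e (f x) u = e x u.
  by move/fixed => {1}<-; apply: f_aut.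
have lt_xw : index x s < index (f x) s.
  case: ltngtP => // [lt_wx|eq_xw].
    by rewrite (perm_inj (fixed _ lt_wx)) eqxx in fxNx.
  by rewrite -(index_inj x (s_full x) (s_full (f x)) eq_xw) eqxx in fxNx.
have fxr : f x != r by rewrite -index_eq0 -lt0n (leq_ltn_trans _ lt_xw).
have adj_both y : y \in nbrs_before x x -> e x y /\ e (f x) y.
  by rewrite mem_nbrs_before => /andP[xy /transfer->].
have nbx_uniq : uniq (nbrs_before x x) by rewrite filter_uniq ?take_uniq.
case nbx: (nbrs_before x x) nbx_uniq => [|a [|b t]] nbx_uniq.
- by have := find_in_nbrs_before (s_parent x (s_full x) xr); rewrite nbx.
- have nbw := unique_nbr_transfer xr lt_xw nbx transfer.
  have [xa _] : e x a /\ e (f x) a by apply: adj_both; rewrite nbx inE.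
  have := phi_ok (f x); rewrite f_phi (mem_forbidden_sibling phi fxr nbw) //.
  by rewrite mem_nbrs_before e_sym xa.
have [xa wa] : e x a /\ e (f x) a by apply: adj_both; rewrite nbx inE eqxx.
have [xb wb] : e x b /\ e (f x) b by apply: adj_both; rewrite nbx !inE eqxx orbT.
move: nbx_uniq; rewrite /= inE => /andP[/norP[/eqP ab _] _]; case: ab.
by apply: (square_diag_eq e_irr girth5 _ xa _ wb); rewrite 1?eq_sym 1?e_sym.
Qed.

Lemma forbidden_distinguishing phi :
  (forall v, phi v \notin forbidden phi v) -> distinguishing e phi.
Proof.
move=> phi_ok f f_aut f_phi.
have fr : f r = r.
  apply/eqP; apply: contraT => fr; have := phi_ok (f r).
  by rewrite f_phi mem_forbidden_root.
suff fixed n v : index v s < n -> f v = v.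
  by apply/permP => v; rewrite perm1 (fixed _ v (ltnSn _)).
elim: n v => // n IH v; rewrite ltnS leq_eqVlt => /orP[/eqP idx_v|/IH //].
have [->|vr] := eqVneq v r; first exact: fr.
by apply: (automorphism_fixed_step phi_ok) => // u; rewrite idx_v; apply: IH.
Qed.

End BfsColoring.

Theorem proposition5 (T : finType) (e : rel T) (C : eqType) (L : T -> seq C) :
  simple_graph e -> connected_graph e -> girth_at_least e 5 ->
  (forall v : T, max_degree e + 2 <= size (undup (L v))) ->
  exists phi : T -> C,
    [/\ proper_coloring e phi, distinguishing e phi & forall v : T, phi v \in L v].
Proof.
move=> [e_sym e_irr] conn girth5 L_big.
have [r _|T0] := pickP (fun _ : T => true); last first.
  have no_vertex (v : T) : False by have := T0 v.
  exists (fun v => False_rect C (no_vertex v)).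
  by split=> [x|f _ _|x]; [|apply/permP => x|]; case: (no_vertex x).
have [s [s_bfs s_full]] := bfs_order_exists e_sym r conn.
have [phi phi_ok] := exists_forbidden_avoiding e_sym s_bfs s_full L_big.
have phi_avoids v : phi v \notin forbidden e r s phi v by case: (phi_ok v).
exists phi; split.
- exact: (forbidden_proper e_sym e_irr s_bfs s_full phi_avoids).
- exact: (forbidden_distinguishing e_sym e_irr s_bfs s_full girth5 phi_avoids).
- by move=> v; case: (phi_ok v).
Qed.
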